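(* Let $n\ge 2$ and let $C$ be a self-locating-dominating code in $P_n\square P_2$. Then $(v_1,1),(v_1,2),(v_n,1),(v_n,2)\in C$ and $|C|\ge n+1$.
   Context: $P_n$ is the path with vertex set $\{v_1,\dots,v_n\}$ and edges $v_iv_{i+1}$ ($1\le i\le n-1$); $P_2$ is the path on vertex set $\{1,2\}$. The Cartesian product $G\square H$ has vertex set $V(G)\times V(H)$, with $(u,v)$ adjacent to $(u',v')$ iff either $u=u'$ and $vv'\in E(H)$, or $uu'\in E(G)$ and $v=v'$. For a vertex $u$, $N[u]$ is its closed neighbourhood. A code is a non-empty subset $C$ of the vertex set $V$; $I(C;u)=N[u]\cap C$. A code $C$ is self-locating-dominating if for every $u\in V\setminus C$ we have $I(C;u)\neq\emptyset$ and $\bigcap_{c\in I(C;u)}N[c]=\{u\}$. *)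

From mathcomp Require Import all_boot.
Set Implicit Arguments. Unset Strict Implicit. Unset Printing Implicit Defensive.

(* Path P_n on 'I_n: vertex v_{i+1} is the ordinal i; edges i ~ i+1. *)
Definition path_adj (n : nat) (a b : 'I_n) : bool :=
  (val a == (val b).+1) || (val b == (val a).+1).

(* Vertex type of P_n \square P_2: pairs (i, j) with i : 'I_n, j : 'I_2
   (j = 0 represents vertex 1 of P_2, j = 1 represents vertex 2). *)
Definition vtx (n : nat) := ('I_n * 'I_2)%type.

Definition box_adj (n : nat) (u v : vtx n) : bool :=
  ((u.1 == v.1) && path_adj u.2 v.2) || (path_adj u.1 v.1 && (u.2 == v.2)).

Definition cnbhd (n : nat) (u : vtx n) : {set vtx n} :=
  [set v | (v == u) || box_adj u v].

Definition Iset (n : nat) (C : {set vtx n}) (u : vtx n) : {set vtx n} :=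
  cnbhd u :&: C.

Definition self_locating_dominating (n : nat) (C : {set vtx n}) : Prop :=
  C != set0 /\
  forall u : vtx n, u \notin C ->
    Iset C u != set0 /\ \bigcap_(c in Iset C u) cnbhd c = [set u].

(* Let u = (i, j) be a non-codeword and m a column equal or adjacent to i.  If
   no codeword of the row j outside column m is a row neighbour of u, then
   every codeword seen by u is adjacent or equal to (m, j'), j' the other row,
   contradicting that these neighbourhoods intersect in {u} only.  Hence both
   row neighbours of a non-codeword are codewords, and the end vertices of the
   path, having a single neighbour, are codewords.  In each row the codewords
   thus contain both ends and meet every pair of consecutive vertices, so there
   are at least (n + 1) / 2 of them. *)

From mathcomp Require Import all_boot zify.

Set Implicit Arguments.
Unset Strict Implicit.
Unset Printing Implicit Defensive.

Lemma path_adjC n (a b : 'I_n) : path_adj a b = path_adj b a.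
Proof. by rewrite /path_adj orbC. Qed.

Lemma path_adj_I2 (a b : 'I_2) : path_adj a b = (a != b).
Proof. by case: a b => [[|[|a]] ha] [[|[|b]] hb]. Qed.

Lemma neq_I2 (a b : 'I_2) : (a != b) = (a == rev_ord b).
Proof. by case: a b => [[|[|a]] ha] [[|[|b]] hb]; rewrite -val_eqE. Qed.

Lemma mem_cnbhd n (u v : vtx n) :
  (v \in cnbhd u) = (v.1 == u.1) || (path_adj v.1 u.1 && (v.2 == u.2)).
Proof.
case: u v => [a b] [c d]; rewrite inE /box_adj path_adj_I2 xpair_eqE /=.
rewrite [path_adj a c]path_adjC (eq_sym b) (eq_sym a).
by case: (c == a); rewrite //= orbA orbN.
Qed.

Lemma sum_adjacent_cover (f : nat -> nat) m :
  0 < f 0 -> 0 < f m -> (forall i, i < m -> 0 < f i + f i.+1) ->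
  m.+2 <= 2 * \sum_(0 <= i < m.+1) f i.
Proof.
move=> f0 fm f_cover.
have inv k : k <= m -> k.+1 + f k <= 2 * \sum_(0 <= i < k.+1) f i.
  elim: k => [|k IHk] k_le; first by rewrite big_nat1; lia.
  by rewrite big_nat_recr //=; have := IHk (ltnW k_le); have := f_cover k k_le; lia.
by have := inv m (leqnn m); lia.
Qed.

Lemma path_end_leaf n (i : 'I_n) : 1 < n -> (i == 0 :> nat) || (i == n.-1 :> nat) ->
  exists2 m : 'I_n, path_adj m i & forall k : 'I_n, path_adj k i -> k = m.
Proof.
move=> n_gt1 i_end.
have [m mE] : {m : 'I_n | nat_of_ord m = if i == 0 :> nat then 1 else n.-2}.
  exists (insubd i (if i == 0 :> nat then 1 else n.-2)).
  by rewrite val_insubd; case: (i == 0 :> nat); rewrite ifT //; lia.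
exists m => [|k]; rewrite /path_adj /=.
  by rewrite mE; move: i_end; case: (nat_of_ord i =P 0); lia.
move=> ki; apply/val_inj/eqP; rewrite /= mE; have := ltn_ord k.
by move: ki i_end; case: (nat_of_ord i =P 0); lia.
Qed.

Section SelfLocatingDominating.
Variables (n : nat) (C : {set vtx n}).
Hypothesis sldC : self_locating_dominating C.

(* Otherwise [(m, rev_ord j)], the vertex of the other row in column [m], would
   lie in the closed neighbourhood of every codeword seen by [(i, j)]. *)
Lemma sld_row_neighbour_off (i m : 'I_n) (j : 'I_2) :
  (i, j) \notin C -> (m == i) || path_adj m i ->
  exists2 k : 'I_n, path_adj k i & (k != m) && ((k, j) \in C).
Proof.
move=> ijC mi; apply/exists_inP; apply: contraT => /exists_inPn noK.
have [_ capE] := sldC.2 _ ijC.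
have : (m, rev_ord j) \in \bigcap_(c in Iset C (i, j)) cnbhd c.
  apply/bigcapP => -[k l]; rewrite inE mem_cnbhd /= => /andP[/orP[/eqP->|/andP[ki /eqP lj]] kC].
  - have /eqP-> : l == rev_ord j by rewrite -neq_I2; apply: contraNneq ijC => <-.
    by rewrite mem_cnbhd /= eqxx andbT.
  - have := noK k ki; rewrite -lj kC andbT negbK => /eqP->.
    by rewrite mem_cnbhd /= eqxx.
by rewrite capE inE xpair_eqE -[rev_ord j == j]negbK neq_I2 eqxx andbF.
Qed.

(* Apply the previous lemma with [m] the column mirroring [k] about [i], or
   [i] itself if the mirror image falls off the path. *)
Lemma sld_row_neighbour_in_code (i k : 'I_n) (j : 'I_2) :
  (i, j) \notin C -> path_adj k i -> (k, j) \in C.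
Proof.
move=> ijC ki; have := ltn_ord i; have := ltn_ord k.
have [m mE] : {m : 'I_n | nat_of_ord m = if 2 * i - k < n then 2 * i - k else i}.
  by exists (insubd i (2 * i - k)); rewrite val_insubd.
move: ki; rewrite /path_adj /= => ki ltk lti.
have mi : (m == i) || path_adj m i.
  by rewrite /path_adj -val_eqE /= mE; case: ifP; lia.
have [k' k'i /andP[k'm k'C]] := sld_row_neighbour_off ijC mi.
suff -> : k = k' by [].
apply/val_inj/eqP; have := ltn_ord k'; move: k'i k'm.
by rewrite /path_adj -!val_eqE /= mE; case: ifP; lia.
Qed.

Lemma sld_leaf_in_code (i m : 'I_n) (j : 'I_2) :
  path_adj m i -> (forall k : 'I_n, path_adj k i -> k = m) -> (i, j) \in C.
Proof.
move=> mi m_uniq; apply: contraT => ijC.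
have mi' : (m == i) || path_adj m i by rewrite mi orbT.
have [k ki /andP[km _]] := sld_row_neighbour_off ijC mi'.
by rewrite (m_uniq k ki) eqxx in km.
Qed.

Lemma sld_end_in_code (i : 'I_n) (j : 'I_2) :
  1 < n -> (i == 0 :> nat) || (i == n.-1 :> nat) -> (i, j) \in C.
Proof.
move=> n_gt1 i_end; have [m mi m_uniq] := path_end_leaf n_gt1 i_end.
exact: sld_leaf_in_code mi m_uniq.
Qed.

Lemma sld_row_card (j : 'I_2) : 1 < n -> n.+1 <= 2 * \sum_(i < n) ((i, j) \in C).
Proof.
move=> n_gt1; have n_gt0 : 0 < n := ltnW n_gt1.
pose i0 : 'I_n := Ordinal n_gt0.
have insubdE k : k < n -> nat_of_ord (insubd i0 k) = k by move=> ltkn; rewrite val_insubd ltkn.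
pose f k := ((insubd i0 k, j) \in C : nat).
have -> : \sum_(i < n) ((i, j) \in C) = \sum_(0 <= k < n) f k.
  by rewrite big_mkord; apply: eq_bigr => i _; rewrite /f valKd.
have f_end k : (k == 0) || (k == n.-1) -> 0 < f k.
  move=> k_end; rewrite /f sld_end_in_code // insubdE //; lia.
have f_cover k : k < n.-1 -> 0 < f k + f k.+1.
  move=> ltk; rewrite /f; case: (boolP (_ \in C)) => // kC.
  rewrite (sld_row_neighbour_in_code kC) // /path_adj /= !insubdE; lia.
have f_last : 0 < f n.-1 by rewrite f_end // eqxx orbT.
by have := sum_adjacent_cover (f_end 0 isT) f_last f_cover; rewrite prednK.
Qed.

End SelfLocatingDominating.

Theorem mainTheorem16 (n : nat) (hn : 2 <= n) (C : {set vtx n}) :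
  self_locating_dominating C ->
  (forall (i : 'I_n) (j : 'I_2),
     (val i == 0) || (val i == n.-1) -> (i, j) \in C) /\
  n.+1 <= #|C|.
Proof.
move=> sldC; split=> [i j|]; first exact: sld_end_in_code.
have -> : #|C| = \sum_(j < 2) \sum_(i < n) ((i, j) \in C).
  rewrite exchange_big pair_big /= -sum1_card big_mkcond /=.
  by apply: eq_bigr => -[i j] _; case: (_ \in C).
have := leq_sum (index_enum 'I_2) (fun j (_ : predT j) => sld_row_card sldC j hn).
by rewrite sum_nat_const card_ord -big_distrr leq_pmul2l.
Qed.
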